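(* Let $\alpha\in(0,1)$ be irrational and let $w\in W_\alpha$. Then there exist $t\in\mathbb{N}$, a (possibly empty) suffix $x$ of $s_t$ or of $s_{t-1}$, and a (possibly empty) prefix $y$ of $s_{t+1}$ such that $w=xy$.
   Context: Let $\alpha=[a_1,a_2,\dots]$ be the continued fraction expansion of $\alpha$. Define words over $\{0,1\}$ by $s_{-1}=1$, $s_0=0$, $s_1=s_0^{a_1-1}s_{-1}$, $s_n=s_{n-1}^{a_n}s_{n-2}$ for $n\ge2$. For $\theta\in[0,1)$, $v_{\alpha,\theta}$ is the two-sided infinite word with letters $v_{\alpha,\theta}(n)=\chi_{[1-\alpha,1)}(n\alpha+\theta\bmod1)$, $n\in\mathbb{Z}$; $W_\alpha$ is the set of all finite non-empty subwords of the words $v_{\alpha,\theta}$, $\theta\in[0,1)$. $\mathbb{N}=\{1,2,\dots\}$. *)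

From Stdlib Require Import Reals ZArith List.
Open Scope R_scope.

Definition irrational (x : R) : Prop :=
  ~ exists p q : Z, q <> 0%Z /\ x = IZR p / IZR q.

Fixpoint cf_rem (alpha : R) (n : nat) : R :=
  match n with
  | O => alpha
  | S k => frac_part (/ cf_rem alpha k)
  end.

(* partial quotients: cf_a alpha k = a_k for k >= 1 (alpha = [0; a_1, a_2, ...]) *)
Definition cf_a (alpha : R) (k : nat) : nat :=
  match k with
  | O => 0%nat
  | S j => Z.to_nat (Int_part (/ cf_rem alpha j))
  end.

Definition wpow (u : list nat) (n : nat) : list nat := concat (repeat u n).

(* sw_pair alpha n = (s_n, s_{n+1}), with s_{-1} = 1, s_0 = 0,
   s_1 = s_0^{a_1 - 1} s_{-1}, s_n = s_{n-1}^{a_n} s_{n-2} (n >= 2) *)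
Fixpoint sw_pair (alpha : R) (n : nat) : list nat * list nat :=
  match n with
  | O => (0%nat :: nil, wpow (0%nat :: nil) (cf_a alpha 1 - 1) ++ 1%nat :: nil)
  | S k => let p := sw_pair alpha k in
           (snd p, wpow (snd p) (cf_a alpha (S (S k))) ++ fst p)
  end.

Definition s (alpha : R) (n : nat) : list nat := fst (sw_pair alpha n).

Definition v (alpha theta : R) (n : Z) : nat :=
  let f := frac_part (IZR n * alpha + theta) in
  if Rle_dec (1 - alpha) f then (if Rlt_dec f 1 then 1%nat else 0%nat) else 0%nat.

Definition inW (alpha : R) (w : list nat) : Prop :=
  w <> nil /\
  exists theta : R, 0 <= theta < 1 /\
  exists m : Z, w = map (fun i : nat => v alpha theta (m + Z.of_nat i)%Z) (seq 0 (length w)).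

Definition is_suffix (x u : list nat) : Prop := exists z, u = z ++ x.
Definition is_prefix (y u : list nat) : Prop := exists z, u = y ++ z.

From Stdlib Require Import Reals ZArith List Lia Lra.
Open Scope R_scope.
Import ListNotations.

(* A word of W_alpha is a window of the lower mechanical word
   n |-> floor((n+1) alpha + theta) - floor(n alpha + theta).  Cutting a mechanical word of
   slope al before each of its ones writes it as the image, under x |-> 0^(a-1) 1 0^x with
   a = floor(1/al), of a mechanical word of slope {1/al} (lower and upper words swap), and the
   same substitution maps the standard words of {1/al} onto those of al.  Applying this twice
   makes the blocks have length at least 2, so a window of length L >= 3 lies in the image of a
   strictly shorter window; by induction on L (lengths <= 2 are checked by hand) every window
   is a factor of some s_n.  Finally s_(n+2) = s_(n+1)^(a_(n+2)) s_n with s_n a prefix of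
   s_(n+1), so a factor of s_(n+2) lies in s_(n+1), in s_n, or is a suffix of s_(n+1) followed
   by a prefix of s_(n+2). *)

Definition factor (w u : list nat) : Prop := exists l r, u = l ++ w ++ r.

Lemma factor_trans u v w : factor u v -> factor v w -> factor u w.
Proof.
  intros [l [r ->]] [l' [r' ->]]. exists (l' ++ l), (r ++ r').
  rewrite <- !app_assoc. reflexivity.
Qed.

Lemma factor_flat_map (h : nat -> list nat) u v :
  factor u v -> factor (flat_map h u) (flat_map h v).
Proof.
  intros [l [r ->]]. exists (flat_map h l), (flat_map h r).
  rewrite !flat_map_app. reflexivity.
Qed.

Lemma is_prefix_trans a b c : is_prefix a b -> is_prefix b c -> is_prefix a c.
Proof. intros [z1 ->] [z2 ->]. exists (z1 ++ z2). symmetry. apply app_assoc. Qed.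

Lemma factor_app_cases A B w : factor w (A ++ B) ->
  factor w A \/ factor w B \/
  exists x y, w = x ++ y /\ is_suffix x A /\ is_prefix y B.
Proof.
  intros [l [r H]]. destruct (app_eq_app _ _ _ _ H) as [m [[HA HB] | [HA HB]]].
  - symmetry in HB. destruct (app_eq_app _ _ _ _ HB) as [m' [[Hw Hr] | [Hw Hr]]].
    + left. exists l, m'. subst. reflexivity.
    + right; right. exists m, m'. split; [exact Hw|]. split.
      * exists l. exact HA.
      * exists r. exact Hr.
  - right; left. exists m, r. exact HB.
Qed.

Lemma wpow_S u n : wpow u (S n) = u ++ wpow u n.
Proof. reflexivity. Qed.

Lemma wpow_snoc u n : wpow u (S n) = wpow u n ++ u.
Proof.
  induction n as [|n IH].
  - apply app_nil_r.
  - change (wpow u (S (S n))) with (u ++ wpow u (S n)).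
    rewrite IH at 1. rewrite app_assoc. reflexivity.
Qed.

Lemma wpow_singleton c n : wpow [c] n = repeat c n.
Proof. unfold wpow. rewrite <- repeat_to_concat. reflexivity. Qed.

Lemma flat_map_wpow (h : nat -> list nat) u n :
  flat_map h (wpow u n) = wpow (flat_map h u) n.
Proof.
  induction n as [|n IH]; [reflexivity|].
  rewrite !wpow_S, flat_map_app, IH. reflexivity.
Qed.

Lemma flat_map_flat_map (h h' : nat -> list nat) u :
  flat_map (fun x => flat_map h (h' x)) u = flat_map h (flat_map h' u).
Proof.
  induction u as [|x u IH]; [reflexivity|].
  simpl. rewrite IH, flat_map_app. reflexivity.
Qed.

Lemma wpow_S_app_prefix u z n : is_prefix u (wpow u (S n) ++ z).
Proof. exists (wpow u n ++ z). rewrite wpow_S, app_assoc. reflexivity. Qed.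

Lemma wpow_app_prefix_S u z n :
  is_prefix z u -> is_prefix (wpow u n ++ z) (wpow u (S n) ++ z).
Proof.
  intros [q Hq]. exists (q ++ z).
  rewrite wpow_snoc, <- !app_assoc. f_equal. rewrite Hq, <- app_assoc. reflexivity.
Qed.

(* The prefix condition makes every power [u^n z] a prefix of [u^A z] for [n <= A],
   so a factor straddling two copies of [u] ends in a prefix of [u^A z]. *)
Lemma factor_wpow_app u z : is_prefix z u -> forall A w,
  factor w (wpow u A ++ z) ->
  factor w u \/ factor w z \/
  exists x y, w = x ++ y /\ is_suffix x u /\ is_prefix y (wpow u A ++ z).
Proof.
  intros Hz A. induction A as [|A IH]; intros w F.
  - right; left. exact F.
  - rewrite wpow_S, <- app_assoc in F.
    destruct (factor_app_cases _ _ _ F) as [Fu | [Fr | [x [y [E [Sx Py]]]]]].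
    + left. exact Fu.
    + destruct (IH w Fr) as [Fu | [Fz | [x [y [E [Sx Py]]]]]]; auto.
      right; right. exists x, y. repeat split; auto.
      eapply is_prefix_trans; [exact Py | apply wpow_app_prefix_S; exact Hz].
    + right; right. exists x, y. repeat split; auto.
      eapply is_prefix_trans; [exact Py | apply wpow_app_prefix_S; exact Hz].
Qed.

Lemma factor_repeat_snoc c d k w : factor w (repeat c k ++ [d]) ->
  is_prefix w (repeat c k ++ [d]) \/ is_suffix w (repeat c k ++ [d]).
Proof.
  intros [l [r H]]. destruct r as [|e r _] using rev_ind.
  - right. exists l. rewrite app_nil_r in H. exact H.
  - left. rewrite !app_assoc in H. apply app_inj_tail in H as [H _].
    assert (Hk : k = (length l + length w + length r)%nat).
    { rewrite <- (repeat_length c k), H, !length_app. reflexivity. }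
    rewrite <- app_assoc in H. apply repeat_eq_app in H as [_ H].
    apply repeat_eq_app in H as [Hw _].
    exists (repeat c (length l + length r) ++ [d]).
    rewrite <- Hw at 1. rewrite app_assoc, <- repeat_app, Hk. f_equal. f_equal. lia.
Qed.

Lemma nat_ind2 (P : nat -> Prop) :
  P 0%nat -> P 1%nat -> (forall k, P k -> P (S k) -> P (S (S k))) -> forall n, P n.
Proof.
  intros H0 H1 HS n. enough (P n /\ P (S n)) by tauto.
  induction n as [|n [IH IHS]]; auto.
Qed.

Lemma s_0 alpha : s alpha 0 = [0%nat].
Proof. reflexivity. Qed.

Lemma s_1 alpha : s alpha 1 = repeat 0%nat (cf_a alpha 1 - 1) ++ [1%nat].
Proof. unfold s. simpl. rewrite wpow_singleton. reflexivity. Qed.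

Lemma s_SS alpha k :
  s alpha (S (S k)) = wpow (s alpha (S k)) (cf_a alpha (S (S k))) ++ s alpha k.
Proof. reflexivity. Qed.

Definition std_split (alpha : R) (w : list nat) : Prop :=
  exists t : nat, (1 <= t)%nat /\
    exists x y : list nat,
      (is_suffix x (s alpha t) \/ is_suffix x (s alpha (t - 1))) /\
      is_prefix y (s alpha (t + 1)) /\ w = x ++ y.

Lemma std_split_suffix alpha t w :
  (1 <= t)%nat -> is_suffix w (s alpha t) -> std_split alpha w.
Proof.
  intros Ht Hw. exists t. split; [exact Ht|]. exists w, [].
  split; [now left|]. split; [now exists (s alpha (t + 1)) | symmetry; apply app_nil_r].
Qed.

Lemma std_split_prefix alpha t w :
  (1 <= t)%nat -> is_prefix w (s alpha (t + 1)) -> std_split alpha w.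
Proof.
  intros Ht Hw. exists t. split; [exact Ht|]. exists [], w.
  split; [left; exists (s alpha t); symmetry; apply app_nil_r|]. now split.
Qed.

Lemma std_split_factor_s0 alpha w : factor w (s alpha 0) -> std_split alpha w.
Proof.
  intros [l [r H]]. rewrite s_0 in H.
  destruct w as [|c w].
  - apply (std_split_suffix alpha 1); [lia|]. exists (s alpha 1). symmetry. apply app_nil_r.
  - exists 1%nat. split; [lia|]. exists (c :: w), [].
    destruct l as [|? l]; [|destruct l; discriminate].
    injection H as <- Hw. destruct w; [|discriminate].
    split; [right; now exists []|]. split; [now exists (s alpha 2)|]. symmetry. apply app_nil_r.
Qed.

Section StandardFactors.

Variable alpha : R.
Hypothesis cf_a_pos : forall k, (1 <= cf_a alpha (S k))%nat.

Lemma s_S_prefix_SS k : is_prefix (s alpha (S k)) (s alpha (S (S k))).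
Proof.
  rewrite s_SS. specialize (cf_a_pos (S k)).
  destruct (cf_a alpha (S (S k))); [lia|]. apply wpow_S_app_prefix.
Qed.

Lemma std_split_factor_s1 w : factor w (s alpha 1) -> std_split alpha w.
Proof.
  intro F. rewrite s_1 in F. destruct (factor_repeat_snoc _ _ _ _ F) as [P | Sf].
  - apply (std_split_prefix alpha 1); [lia|].
    eapply is_prefix_trans; [| apply s_S_prefix_SS]. rewrite s_1. exact P.
  - apply (std_split_suffix alpha 1); [lia|]. rewrite s_1. exact Sf.
Qed.

Lemma std_split_factor_s2_cf_a1 :
  cf_a alpha 1 = 1%nat -> forall w, factor w (s alpha 2) -> std_split alpha w.
Proof.
  intros Ha w F.
  assert (E : s alpha 2 = repeat 1%nat (cf_a alpha 2) ++ [0%nat]).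
  { rewrite s_SS, s_1, s_0, Ha. apply (f_equal (fun u => u ++ _)), wpow_singleton. }
  rewrite E in F. destruct (factor_repeat_snoc _ _ _ _ F) as [P | Sf].
  - apply (std_split_prefix alpha 1); [lia|]. change (is_prefix w (s alpha 2)).
    rewrite E. exact P.
  - apply (std_split_suffix alpha 2); [lia|]. rewrite E. exact Sf.
Qed.

Lemma std_split_factor_SS k :
  is_prefix (s alpha k) (s alpha (S k)) ->
  (forall w, factor w (s alpha k) -> std_split alpha w) ->
  (forall w, factor w (s alpha (S k)) -> std_split alpha w) ->
  forall w, factor w (s alpha (S (S k))) -> std_split alpha w.
Proof.
  intros Hpre IH0 IH1 w F. rewrite s_SS in F.
  destruct (factor_wpow_app _ _ Hpre _ _ F) as [F1 | [F0 | [x [y [E [Sx Py]]]]]]; auto.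
  exists (S k). split; [lia|]. exists x, y. split; [now left|]. split; [|exact E].
  rewrite Nat.add_1_r, s_SS. exact Py.
Qed.

Lemma std_split_factor_s n w : factor w (s alpha n) -> std_split alpha w.
Proof.
  revert w. induction n as [| | k IH0 IH1] using nat_ind2.
  - apply std_split_factor_s0.
  - exact std_split_factor_s1.
  - destruct k as [|k].
    + destruct (Nat.eq_dec (cf_a alpha 1) 1) as [Ha | Ha].
      * exact (std_split_factor_s2_cf_a1 Ha).
      * apply std_split_factor_SS; auto. rewrite s_0, s_1.
        specialize (cf_a_pos 0%nat).
        destruct (cf_a alpha 1 - 1)%nat as [|m] eqn:Em; [lia|]. now eexists.
    + apply std_split_factor_SS; auto. apply s_S_prefix_SS.
Qed.

Lemma factor_s_junction k X c d Y :
  s alpha (S k) = X ++ [c] -> s alpha k = d :: Y -> factor [c; d] (s alpha (S (S k))).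
Proof.
  intros HX HY. rewrite s_SS. specialize (cf_a_pos (S k)).
  destruct (cf_a alpha (S (S k))) as [|n]; [lia|].
  rewrite wpow_snoc, HY. rewrite HX at 2. exists (wpow (s alpha (S k)) n ++ X), Y.
  rewrite <- !app_assoc. reflexivity.
Qed.

Lemma factor_s_10 : factor [1%nat; 0%nat] (s alpha 2).
Proof.
  apply (factor_s_junction 0 (repeat 0%nat (cf_a alpha 1 - 1)) _ _ []); [apply s_1 | reflexivity].
Qed.

Lemma factor_s_01 : exists n, factor [0%nat; 1%nat] (s alpha n).
Proof.
  destruct (Nat.eq_dec (cf_a alpha 1) 1) as [Ha | Ha].
  - exists 3%nat. apply (factor_s_junction 1 (wpow (s alpha 1) (cf_a alpha 2)) _ _ []).
    + reflexivity.
    + rewrite s_1, Ha. reflexivity.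
  - exists 1%nat. rewrite s_1. specialize (cf_a_pos 0%nat).
    replace (cf_a alpha 1 - 1)%nat with (cf_a alpha 1 - 2 + 1)%nat by lia.
    rewrite repeat_app. exists (repeat 0%nat (cf_a alpha 1 - 2)), [].
    rewrite <- app_assoc. reflexivity.
Qed.

Lemma factor_s_00 : (2 <= cf_a alpha 1)%nat -> factor [0%nat; 0%nat] (s alpha 3).
Proof.
  intro Ha. apply (factor_s_junction 1 (wpow (s alpha 1) (cf_a alpha 2)) _ _
                                       (repeat 0%nat (cf_a alpha 1 - 2) ++ [1%nat])).
  - reflexivity.
  - rewrite s_1. replace (cf_a alpha 1 - 1)%nat with (S (cf_a alpha 1 - 2)) by lia. reflexivity.
Qed.

Lemma factor_s_11 : cf_a alpha 1 = 1%nat -> factor [1%nat; 1%nat] (s alpha 4).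
Proof.
  intro Ha. apply (factor_s_junction 2 (wpow (s alpha 2) (cf_a alpha 3)) _ _
                                       (wpow [1%nat] (cf_a alpha 2 - 1) ++ [0%nat])).
  - rewrite s_SS, s_1, Ha. reflexivity.
  - rewrite s_SS, s_1, s_0, Ha. specialize (cf_a_pos 1%nat).
    destruct (cf_a alpha 2) as [|c]; [lia|]. replace (S c - 1)%nat with c by lia. reflexivity.
Qed.

End StandardFactors.

Lemma IZR_le_of_lt_succ z1 z2 : IZR z1 < IZR z2 + 1 -> (z1 <= z2)%Z.
Proof.
  intro H. assert (IZR z1 < IZR (z2 + 1)) by (rewrite plus_IZR; exact H).
  apply lt_IZR in H0. lia.
Qed.

Lemma Int_part_bounds x : IZR (Int_part x) <= x < IZR (Int_part x) + 1.
Proof. destruct (base_Int_part x). lra. Qed.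

Lemma Int_part_unique z x : IZR z <= x < IZR z + 1 -> Int_part x = z.
Proof. intro H. symmetry. apply Int_part_spec. lra. Qed.

Lemma frac_part_bounds x : 0 <= frac_part x < 1.
Proof. destruct (base_fp x). lra. Qed.

Lemma Int_part_inv_ge1 al : 0 < al < 1 -> (1 <= Int_part (/ al))%Z.
Proof.
  intro Ha. assert (1 < / al) by (rewrite <- Rinv_1; apply Rinv_lt_contravar; lra).
  destruct (Int_part_bounds (/ al)). apply IZR_le_of_lt_succ. simpl. lra.
Qed.

(* If [{1/x} = p/q] then [x = q / (q Int_part(1/x) + p)]. *)
Lemma frac_part_inv_irrational x : 0 < x < 1 -> irrational x ->
  0 < frac_part (/ x) < 1 /\ irrational (frac_part (/ x)).
Proof.
  intros Hx Hirr. set (n := Int_part (/ x)).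
  assert (E : frac_part (/ x) = / x - IZR n) by reflexivity.
  assert (Hn : (1 <= n)%Z) by (apply Int_part_inv_ge1; exact Hx).
  pose proof (frac_part_bounds (/ x)) as Hf.
  split; [split; [|lra]|].
  - destruct (proj1 Hf) as [Hlt | Heq]; [exact Hlt|]. exfalso. apply Hirr.
    exists 1%Z, n. split; [lia|]. rewrite <- Heq in E.
    replace (IZR n) with (/ x) by lra. field. lra.
  - intros [p [q [Hq Hpq]]]. apply Hirr. exists q, (n * q + p)%Z.
    assert (Hq' : IZR q <> 0) by (apply not_0_IZR; exact Hq).
    assert (Hinv : / x = IZR (n * q + p) / IZR q).
    { rewrite plus_IZR, mult_IZR. transitivity (IZR n + IZR p / IZR q); [lra | field; exact Hq']. }
    assert (Hnz : IZR (n * q + p) <> 0).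
    { intro H0. rewrite H0 in Hinv. unfold Rdiv in Hinv. rewrite Rmult_0_l in Hinv.
      assert (0 < / x) by (apply Rinv_0_lt_compat; lra). lra. }
    split.
    + intro H0. apply Hnz. rewrite H0. reflexivity.
    + rewrite <- (Rinv_inv x), Hinv. field. split; assumption.
Qed.

Lemma cf_rem_shift alpha k : cf_rem (cf_rem alpha 1) k = cf_rem alpha (S k).
Proof. induction k as [|k IH]; simpl in *; [reflexivity | rewrite IH; reflexivity]. Qed.

Lemma cf_a_shift alpha k : cf_a (cf_rem alpha 1) (S k) = cf_a alpha (S (S k)).
Proof. unfold cf_a. rewrite cf_rem_shift. reflexivity. Qed.

Lemma cf_rem_bounds alpha : 0 < alpha < 1 -> irrational alpha ->
  forall k, 0 < cf_rem alpha k < 1 /\ irrational (cf_rem alpha k).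
Proof.
  intros Ha Hi k. induction k as [|k [IH1 IH2]]; [now split|].
  apply frac_part_inv_irrational; assumption.
Qed.

Lemma cf_a_pos alpha : 0 < alpha < 1 -> irrational alpha ->
  forall k, (1 <= cf_a alpha (S k))%nat.
Proof.
  intros Ha Hi k. destruct (cf_rem_bounds alpha Ha Hi k) as [Hk _].
  pose proof (Int_part_inv_ge1 _ Hk). unfold cf_a. lia.
Qed.

Definition cf_block (a x : nat) : list nat := repeat 0%nat (a - 1) ++ 1%nat :: repeat 0%nat x.

Lemma cf_block_length a x : (1 <= a)%nat -> length (cf_block a x) = (a + x)%nat.
Proof.
  intro Ha. unfold cf_block. rewrite length_app, repeat_length. simpl.
  rewrite repeat_length. lia.
Qed.

Lemma flat_map_cf_block_s alpha : (1 <= cf_a alpha 2)%nat -> forall k,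
  flat_map (cf_block (cf_a alpha 1)) (s (cf_rem alpha 1) k) = s alpha (S k).
Proof.
  intros Ha2 k. set (h := cf_block (cf_a alpha 1)).
  induction k as [| | k IH0 IH1] using nat_ind2.
  - rewrite s_0, s_1. simpl. apply app_nil_r.
  - assert (E0 : flat_map h [0%nat] = s alpha 1) by (rewrite s_1; apply app_nil_r).
    assert (E1 : flat_map h [1%nat] = s alpha 1 ++ s alpha 0).
    { rewrite s_1, s_0. simpl. rewrite app_nil_r, <- app_assoc. reflexivity. }
    rewrite s_1, (cf_a_shift alpha 0), flat_map_app, <- wpow_singleton, flat_map_wpow.
    rewrite E0, E1, app_assoc, <- wpow_snoc, s_SS.
    replace (S (cf_a alpha 2 - 1)) with (cf_a alpha 2) by lia. reflexivity.
  - rewrite s_SS, flat_map_app, flat_map_wpow, IH0, IH1, (cf_a_shift alpha (S k)).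
    reflexivity.
Qed.

Definition ceil_part (x : R) : Z := (- Int_part (- x))%Z.

Lemma ceil_part_bounds x : IZR (ceil_part x) - 1 < x <= IZR (ceil_part x).
Proof. unfold ceil_part. rewrite opp_IZR. destruct (Int_part_bounds (- x)). lra. Qed.

Lemma ceil_part_unique z x : IZR z - 1 < x <= IZR z -> ceil_part x = z.
Proof.
  intro H. unfold ceil_part. rewrite (Int_part_unique (- z)); [lia|].
  rewrite opp_IZR. lra.
Qed.

Definition round_part (upper : bool) (x : R) : Z :=
  if upper then ceil_part x else Int_part x.

Lemma round_part_shift upper k x :
  round_part upper (IZR k + x) = (k + round_part upper x)%Z.
Proof.
  destruct upper; simpl.
  - apply ceil_part_unique. rewrite plus_IZR. destruct (ceil_part_bounds x). lra.
  - apply Int_part_unique. rewrite plus_IZR. destruct (Int_part_bounds x). lra.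
Qed.

Lemma round_part_sub_bounds upper x d :
  d - 1 < IZR (round_part upper (x + d) - round_part upper x) < d + 1.
Proof.
  rewrite minus_IZR. destruct upper; simpl.
  - destruct (ceil_part_bounds x), (ceil_part_bounds (x + d)). lra.
  - destruct (Int_part_bounds x), (Int_part_bounds (x + d)). lra.
Qed.

(* The lower ([upper = false]) and upper mechanical words of slope [al] and intercept [rho]. *)
Definition mechZ (upper : bool) (al rho : R) (n : Z) : Z :=
  (round_part upper (IZR (n + 1) * al + rho) - round_part upper (IZR n * al + rho))%Z.

Definition mech (upper : bool) (al rho : R) (n : Z) : nat := Z.to_nat (mechZ upper al rho n).

Lemma IZR_succ_mul n al rho : IZR (n + 1) * al + rho = IZR n * al + rho + al.
Proof. rewrite plus_IZR. ring. Qed.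

Lemma mechZ_bounds upper al rho n : 0 <= al < 1 -> (0 <= mechZ upper al rho n <= 1)%Z.
Proof.
  intro Ha. unfold mechZ. rewrite IZR_succ_mul.
  pose proof (round_part_sub_bounds upper (IZR n * al + rho) al) as H.
  set (m := (_ - _)%Z) in H.
  assert (-1 < m)%Z by (apply lt_IZR; simpl; lra).
  assert (m < 2)%Z by (apply lt_IZR; simpl; lra). lia.
Qed.

Lemma mech_le1 upper al rho n : 0 <= al < 1 -> (mech upper al rho n <= 1)%nat.
Proof. intro Ha. unfold mech. destruct (mechZ_bounds upper al rho n Ha). lia. Qed.

Lemma mech_mechZ upper al rho n : 0 <= al < 1 ->
  Z.of_nat (mech upper al rho n) = mechZ upper al rho n.
Proof. intro Ha. unfold mech. destruct (mechZ_bounds upper al rho n Ha). lia. Qed.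

(* For the upper word, [one_pos j] is the [n] with [j] in [[n al + rho, (n+1) al + rho)];
   for the lower word, the [n] with [j] in [(n al + rho, (n+1) al + rho]]. *)
Definition one_pos (upper : bool) (al rho : R) (j : Z) : Z :=
  if upper then Int_part ((IZR j - rho) / al)
  else (ceil_part ((IZR j - rho) / al) - 1)%Z.

Lemma Z_seq_growth (N : Z -> Z) c : (forall j, N j + c <= N (j + 1))%Z ->
  forall j1 j2, (j1 <= j2)%Z -> (N j1 + c * (j2 - j1) <= N j2)%Z.
Proof.
  intros H j1 j2 Hj.
  enough (G : forall k : nat, (N j1 + c * Z.of_nat k <= N (j1 + Z.of_nat k))%Z).
  { specialize (G (Z.to_nat (j2 - j1))). rewrite Z2Nat.id in G by lia.
    replace (j1 + (j2 - j1))%Z with j2 in G by lia. exact G. }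
  induction k as [|k IH]; [cbn [Z.of_nat]; rewrite Z.mul_0_r, !Z.add_0_r; lia|].
  specialize (H (j1 + Z.of_nat k)%Z). rewrite Nat2Z.inj_succ, Z.mul_succ_r.
  replace (j1 + Z.succ (Z.of_nat k))%Z with (j1 + Z.of_nat k + 1)%Z by lia. lia.
Qed.

Lemma one_pos_round upper al rho j :
  one_pos upper al rho j =
  (round_part (negb upper) ((IZR j - rho) / al) - if upper then 0 else 1)%Z.
Proof. destruct upper; simpl; lia. Qed.

Section OnePositions.

Variables (upper : bool) (al rho : R).
Hypothesis al_bounds : 0 < al < 1.

Lemma mechZ_one_pos j : mechZ upper al rho (one_pos upper al rho j) = 1%Z.
Proof.
  unfold mechZ, one_pos. set (y := (IZR j - rho) / al).
  assert (Hy : y * al = IZR j - rho) by (unfold y; field; lra).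
  rewrite IZR_succ_mul. destruct upper; simpl.
  - destruct (Int_part_bounds y) as [H1 H2]. set (n := Int_part y) in *.
    assert (IZR n * al <= y * al) by (apply Rmult_le_compat_r; lra).
    assert (y * al < (IZR n + 1) * al) by (apply Rmult_lt_compat_r; lra).
    rewrite (ceil_part_unique (j + 1)), (ceil_part_unique j); [lia | | rewrite plus_IZR]; lra.
  - destruct (ceil_part_bounds y) as [H1 H2]. set (c := ceil_part y) in *.
    assert ((IZR c - 1) * al < y * al) by (apply Rmult_lt_compat_r; lra).
    assert (y * al <= IZR c * al) by (apply Rmult_le_compat_r; lra).
    rewrite minus_IZR.
    rewrite (Int_part_unique j), (Int_part_unique (j - 1)); [lia | rewrite minus_IZR | ]; lra.
Qed.

Lemma mechZ_eq1_one_pos n : mechZ upper al rho n = 1%Z -> exists j, one_pos upper al rho j = n.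
Proof.
  unfold mechZ. rewrite IZR_succ_mul. set (x := IZR n * al + rho). intro H1.
  destruct upper; simpl in H1.
  - exists (ceil_part x). unfold one_pos. apply Int_part_unique.
    destruct (ceil_part_bounds x), (ceil_part_bounds (x + al)).
    replace (ceil_part (x + al)) with (ceil_part x + 1)%Z in * by lia. rewrite plus_IZR in *.
    split; [apply Rmult_le_reg_r with al | apply Rmult_lt_reg_r with al];
      unfold Rdiv; rewrite ?Rmult_assoc, ?Rinv_l, ?Rmult_1_r; unfold x in *; lra.
  - exists (Int_part (x + al)). unfold one_pos.
    destruct (Int_part_bounds x), (Int_part_bounds (x + al)).
    replace (Int_part (x + al)) with (Int_part x + 1)%Z in * by lia. rewrite plus_IZR in *.
    enough (ceil_part ((IZR (Int_part x) + 1 - rho) / al) = n + 1)%Z by lia.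
    apply ceil_part_unique. rewrite plus_IZR.
    split; [apply Rmult_lt_reg_r with al | apply Rmult_le_reg_r with al];
      unfold Rdiv; rewrite ?Rmult_assoc, ?Rinv_l, ?Rmult_1_r; unfold x in *; lra.
Qed.

(* [(j - rho) / al = j Int_part(1/al) + (j {1/al} - rho/al)]: the gaps between consecutive
   ones are read off a mechanical word of slope [{1/al}], of the other type. *)
Lemma one_pos_succ j :
  one_pos upper al rho (j + 1) =
  (one_pos upper al rho j + Int_part (/ al)
   + mechZ (negb upper) (frac_part (/ al)) (- rho / al) j)%Z.
Proof.
  assert (E : forall i, (IZR i - rho) / al =
                        IZR (i * Int_part (/ al)) + (IZR i * frac_part (/ al) + - rho / al)).
  { intro i. unfold frac_part. rewrite mult_IZR. field. lra. }
  rewrite !one_pos_round, !E, !round_part_shift. unfold mechZ. lia.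
Qed.

Lemma one_pos_step j :
  (one_pos upper al rho j + Int_part (/ al) <= one_pos upper al rho (j + 1))%Z.
Proof.
  rewrite one_pos_succ.
  destruct (mechZ_bounds (negb upper) (frac_part (/ al)) (- rho / al) j (frac_part_bounds _)).
  lia.
Qed.

Lemma one_pos_growth j1 j2 : (j1 <= j2)%Z ->
  (one_pos upper al rho j1 + (j2 - j1) <= one_pos upper al rho j2)%Z.
Proof.
  intro Hj. pose proof (Int_part_inv_ge1 al al_bounds).
  assert (Hs : forall j, (one_pos upper al rho j + 1 <= one_pos upper al rho (j + 1))%Z).
  { intro j. pose proof (one_pos_step j). lia. }
  pose proof (Z_seq_growth _ 1 Hs j1 j2 Hj). lia.
Qed.

Lemma mech_between_one_pos j n :
  (one_pos upper al rho j < n < one_pos upper al rho (j + 1))%Z -> mech upper al rho n = 0%nat.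
Proof.
  intro Hn. unfold mech. destruct (mechZ_bounds upper al rho n ltac:(lra)).
  destruct (Z.eq_dec (mechZ upper al rho n) 1) as [E | E]; [exfalso | lia].
  destruct (mechZ_eq1_one_pos n E) as [j' <-].
  destruct (Z.le_gt_cases j' j).
  - pose proof (one_pos_growth j' j). lia.
  - pose proof (one_pos_growth (j + 1) j'). lia.
Qed.

End OnePositions.

Definition window (f : Z -> nat) (m : Z) (L : nat) : list nat :=
  map (fun i => f (m + Z.of_nat i)%Z) (seq 0 L).

Lemma window_length f m L : length (window f m L) = L.
Proof. unfold window. rewrite length_map, length_seq. reflexivity. Qed.

Lemma window_nth f m L i : (i < L)%nat -> nth i (window f m L) 0%nat = f (m + Z.of_nat i)%Z.
Proof.
  intro Hi. unfold window. set (F := fun i => f (m + Z.of_nat i)%Z).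
  transitivity (nth i (map F (seq 0 L)) (F 0%nat)).
  - apply nth_indep. rewrite length_map, length_seq. exact Hi.
  - rewrite map_nth, seq_nth by exact Hi. reflexivity.
Qed.

Lemma window_S f m L : window f m (S L) = f m :: window f (m + 1) L.
Proof.
  unfold window. simpl. rewrite Z.add_0_r. f_equal.
  rewrite <- seq_shift, map_map. apply map_ext. intro i. f_equal. lia.
Qed.

Lemma window_add f m L1 L2 :
  window f m (L1 + L2) = window f m L1 ++ window f (m + Z.of_nat L1) L2.
Proof.
  revert m. induction L1 as [|L1 IH]; intro m.
  - rewrite Z.add_0_r. reflexivity.
  - simpl plus. rewrite !window_S, IH. simpl. do 3 f_equal. lia.
Qed.

Definition subst_image (f : Z -> nat) (h : nat -> list nat) (g : Z -> nat) (N : Z -> Z) : Prop :=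
  forall j, N (j + 1)%Z = (N j + Z.of_nat (length (h (g j))))%Z /\
            window f (N j) (length (h (g j))) = h (g j).

Section SubstImage.

Variables (f g : Z -> nat) (h : nat -> list nat) (N : Z -> Z).
Hypothesis image : subst_image f h g N.

Lemma subst_image_window k j :
  N (j + Z.of_nat k)%Z = (N j + Z.of_nat (length (flat_map h (window g j k))))%Z /\
  window f (N j) (length (flat_map h (window g j k))) = flat_map h (window g j k).
Proof.
  revert j. induction k as [|k IH]; intro j.
  - rewrite Z.add_0_r. split; [simpl; lia | reflexivity].
  - rewrite window_S. simpl flat_map. rewrite length_app.
    destruct (image j) as [Hn Hw]. destruct (IH (j + 1)%Z) as [In Iw]. split.
    + replace (j + Z.of_nat (S k))%Z with (j + 1 + Z.of_nat k)%Z by lia. lia.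
    + rewrite window_add, Hw, <- Hn, Iw. reflexivity.
Qed.

Lemma window_factor_subst_image j k m L :
  (N j <= m)%Z -> (m + Z.of_nat L <= N (j + Z.of_nat k))%Z ->
  factor (window f m L) (flat_map h (window g j k)).
Proof.
  intros Hl Hr. destruct (subst_image_window k j) as [Hn Hw].
  set (p := Z.to_nat (m - N j)). set (q := Z.to_nat (N (j + Z.of_nat k) - (m + Z.of_nat L))).
  assert (Hlen : length (flat_map h (window g j k)) = (p + (L + q))%nat) by (unfold p, q; lia).
  rewrite <- Hw, Hlen, !window_add.
  exists (window f (N j) p), (window f (N j + Z.of_nat p + Z.of_nat L) q).
  replace (N j + Z.of_nat p)%Z with m by (unfold p; lia). reflexivity.
Qed.

Hypothesis blocks_long : forall x, (2 <= length (h x))%nat.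

Lemma subst_image_step j : (N j + 2 <= N (j + 1))%Z.
Proof. destruct (image j) as [Hn _]. specialize (blocks_long (g j)). lia. Qed.

Lemma subst_image_locate m : exists j, (N j <= m < N (j + 1))%Z.
Proof.
  set (d := Z.abs (m - N 0%Z)).
  enough (G : forall k : nat, forall j, (N j <= m < N (j + Z.of_nat k))%Z ->
                exists i, (N i <= m < N (i + 1))%Z).
  { apply (G (Z.to_nat (2 * d + 1)) (- d)%Z).
    pose proof (Z_seq_growth N 2 subst_image_step (- d) 0 ltac:(lia)).
    pose proof (Z_seq_growth N 2 subst_image_step 0 (d + 1) ltac:(lia)).
    rewrite Z2Nat.id by lia. replace (- d + (2 * d + 1))%Z with (d + 1)%Z by lia. lia. }
  induction k as [|k IH]; intros j Hj; [rewrite Z.add_0_r in Hj; lia|].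
  destruct (Z.lt_ge_cases m (N (j + Z.of_nat k))%Z).
  - apply (IH j). lia.
  - exists (j + Z.of_nat k)%Z. rewrite Nat2Z.inj_succ, <- Z.add_1_r, Z.add_assoc in Hj. lia.
Qed.

(* Blocks have length at least 2, so the [k] blocks covering a window of length [L]
   satisfy [2 (k - 2) <= L - 2]. *)
Lemma window_in_subst_image m L : (1 <= L)%nat ->
  exists j k, factor (window f m L) (flat_map h (window g j k)) /\ (2 * k <= L + 2)%nat.
Proof.
  intro HL. pose proof (Z_seq_growth N 2 subst_image_step) as G.
  destruct (subst_image_locate m) as [j1 Hj1].
  destruct (subst_image_locate (m + Z.of_nat L - 1)) as [j2 Hj2].
  assert (Hj : (j1 <= j2)%Z).
  { destruct (Z.le_gt_cases j1 j2) as [|Hlt]; [assumption|].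
    pose proof (G (j2 + 1) j1 ltac:(lia))%Z. lia. }
  exists j1, (Z.to_nat (j2 - j1 + 1)). split.
  - apply window_factor_subst_image; [lia|]. rewrite Z2Nat.id by lia.
    replace (j1 + (j2 - j1 + 1))%Z with (j2 + 1)%Z by lia. lia.
  - destruct (Z.eq_dec j1 j2) as [<- | Hne].
    + replace (j1 - j1 + 1)%Z with 1%Z by lia. simpl. lia.
    + pose proof (G (j1 + 1) j2 ltac:(lia))%Z. lia.
Qed.

End SubstImage.

Lemma subst_image_comp f g e h h' N N' :
  subst_image f h g N -> subst_image g h' e N' ->
  subst_image f (fun x => flat_map h (h' x)) e (fun i => N (N' i)).
Proof.
  intros I I' i. destruct (I' i) as [Hn Hw].
  destruct (subst_image_window f g h N I (length (h' (e i))) (N' i)) as [Bn Bw].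
  rewrite Hw in Bn, Bw. rewrite Hn. split; assumption.
Qed.

Lemma nth_cf_block a x i : nth i (cf_block a x) 0%nat =
  if (i <? a - 1)%nat then 0%nat else if (i =? a - 1)%nat then 1%nat else 0%nat.
Proof.
  unfold cf_block. destruct (Nat.ltb_spec i (a - 1)).
  - rewrite app_nth1 by (rewrite repeat_length; assumption). apply nth_repeat.
  - rewrite app_nth2 by (rewrite repeat_length; assumption). rewrite repeat_length.
    destruct (Nat.eqb_spec i (a - 1)) as [-> | Hne].
    + rewrite Nat.sub_diag. reflexivity.
    + destruct (i - (a - 1))%nat as [|k] eqn:E; [lia|]. simpl.
      destruct (Nat.lt_ge_cases k x).
      * apply nth_repeat.
      * apply nth_overflow. rewrite repeat_length. assumption.
Qed.

(* Each one is preceded by at least [a - 1] zeros, so cutting [a - 1] letters before each one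
   splits the word into the blocks [0^(a-1) 1 0^x]. *)
Lemma mech_subst_image upper al rho : 0 < al < 1 ->
  subst_image (mech upper al rho) (cf_block (Z.to_nat (Int_part (/ al))))
              (mech (negb upper) (frac_part (/ al)) (- rho / al))
              (fun j => one_pos upper al rho j - (Int_part (/ al) - 1))%Z.
Proof.
  intros Ha j. pose proof (Int_part_inv_ge1 al Ha) as Hn.
  pose proof (one_pos_succ upper al rho Ha j) as Hsucc.
  pose proof (one_pos_step upper al rho Ha (j - 1)) as Hprev.
  rewrite Z.sub_add in Hprev.
  set (n := Int_part (/ al)) in *.
  set (g := mech (negb upper) (frac_part (/ al)) (- rho / al) j).
  assert (Hg : Z.of_nat g = mechZ (negb upper) (frac_part (/ al)) (- rho / al) j)
    by (apply mech_mechZ, frac_part_bounds).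
  rewrite cf_block_length by lia. split; [lia|].
  apply nth_ext with 0%nat 0%nat; [rewrite window_length, cf_block_length; lia|].
  intros i Hi. rewrite window_length in Hi. rewrite window_nth by exact Hi. rewrite nth_cf_block.
  destruct (Nat.ltb_spec i (Z.to_nat n - 1)); [|destruct (Nat.eqb_spec i (Z.to_nat n - 1))].
  - apply (mech_between_one_pos upper al rho Ha (j - 1)). rewrite Z.sub_add. lia.
  - replace (one_pos upper al rho j - (n - 1) + Z.of_nat i)%Z with (one_pos upper al rho j) by lia.
    unfold mech. rewrite mechZ_one_pos by exact Ha. reflexivity.
  - apply (mech_between_one_pos upper al rho Ha j). lia.
Qed.

Lemma mech_subst_image_twice upper al rho : 0 < al < 1 -> 0 < cf_rem al 1 < 1 ->
  exists N, subst_image (mech upper al rho)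
    (fun x => flat_map (cf_block (cf_a al 1)) (cf_block (cf_a (cf_rem al 1) 1) x))
    (mech upper (cf_rem al 2) (- (- rho / al) / cf_rem al 1)) N.
Proof.
  intros Ha Ha1.
  pose proof (subst_image_comp _ _ _ _ _ _ _ (mech_subst_image upper al rho Ha)
                (mech_subst_image (negb upper) _ (- rho / al) Ha1)) as C.
  rewrite Bool.negb_involutive in C. eexists. exact C.
Qed.

Lemma cf_block_twice_length a a1 x : (1 <= a)%nat ->
  (2 <= length (flat_map (cf_block a) (cf_block a1 x)))%nat.
Proof.
  intro Ha. unfold cf_block at 2. rewrite flat_map_app. simpl.
  rewrite !length_app, (cf_block_length a 1) by exact Ha. lia.
Qed.

Lemma flat_map_cf_block_twice_s al : 0 < al < 1 -> irrational al -> forall n,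
  flat_map (fun x => flat_map (cf_block (cf_a al 1)) (cf_block (cf_a (cf_rem al 1) 1) x))
           (s (cf_rem al 2) n) = s al (S (S n)).
Proof.
  intros Ha Hi n. pose proof (cf_a_pos al Ha Hi) as Hpos.
  rewrite flat_map_flat_map. change (cf_rem al 2) with (cf_rem (cf_rem al 1) 1).
  rewrite flat_map_cf_block_s; [apply flat_map_cf_block_s, Hpos|].
  rewrite cf_a_shift. apply Hpos.
Qed.

Lemma mechZ_pair_bounds upper al rho m :
  2 * al - 1 < IZR (mechZ upper al rho m + mechZ upper al rho (m + 1)) < 2 * al + 1.
Proof.
  set (x := IZR m * al + rho).
  assert (E : (mechZ upper al rho m + mechZ upper al rho (m + 1) =
               round_part upper (x + 2 * al) - round_part upper x)%Z).
  { unfold mechZ. rewrite !IZR_succ_mul. fold x.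
    replace (x + al + al) with (x + 2 * al) by ring. lia. }
  rewrite E. apply round_part_sub_bounds.
Qed.

Lemma cf_a1_ge2 al : 0 < al -> 2 * al < 1 -> (2 <= cf_a al 1)%nat.
Proof.
  intros H0 H. assert (2 < / al).
  { apply Rmult_lt_reg_r with al; [exact H0|]. rewrite Rinv_l by lra. lra. }
  destruct (Int_part_bounds (/ al)).
  assert (2 <= Int_part (/ al))%Z by (apply IZR_le_of_lt_succ; simpl; lra).
  simpl. lia.
Qed.

Lemma cf_a1_eq1 al : 0 < al < 1 -> 1 < 2 * al -> cf_a al 1 = 1%nat.
Proof.
  intros Ha H. assert (/ al < 2).
  { apply Rmult_lt_reg_r with al; [lra|]. rewrite Rinv_l by lra. lra. }
  destruct (Int_part_bounds (/ al)).
  assert (Int_part (/ al) <= 1)%Z by (apply IZR_le_of_lt_succ; simpl; lra).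
  pose proof (Int_part_inv_ge1 al Ha). simpl. lia.
Qed.

Lemma factor_s_mech_pair upper al rho m : 0 < al < 1 -> irrational al ->
  exists n, factor (window (mech upper al rho) m 2) (s al n).
Proof.
  intros Ha Hi. pose proof (cf_a_pos al Ha Hi) as Hpos.
  rewrite !window_S. cbn [window seq map].
  pose proof (mechZ_pair_bounds upper al rho m) as Hpair.
  rewrite <- !mech_mechZ in Hpair by lra.
  pose proof (mech_le1 upper al rho m ltac:(lra)).
  pose proof (mech_le1 upper al rho (m + 1) ltac:(lra)).
  destruct (mech upper al rho m) as [|[|]]; [| | lia];
    destruct (mech upper al rho (m + 1)) as [|[|]]; try lia; simpl in Hpair.
  - exists 3%nat. apply factor_s_00, cf_a1_ge2; [exact Hpos | lra | lra].
  - apply factor_s_01. exact Hpos.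
  - exists 2%nat. apply factor_s_10. exact Hpos.
  - exists 4%nat. apply factor_s_11, cf_a1_eq1; [exact Hpos | lra | lra].
Qed.

Lemma factor_s_mech_window L : forall upper al rho m, 0 < al < 1 -> irrational al ->
  exists n, factor (window (mech upper al rho) m L) (s al n).
Proof.
  induction L as [L IH] using (well_founded_induction lt_wf).
  intros upper al rho m Ha Hi.
  destruct L as [|[|[|L']]].
  - exists 0%nat. exists (s al 0), []. reflexivity.
  - pose proof (mech_le1 upper al rho m ltac:(lra)).
    rewrite window_S. cbn [window seq map].
    destruct (mech upper al rho m) as [|[|]]; [| | lia].
    + exists 0%nat. exists [], []. reflexivity.
    + exists 1%nat. rewrite s_1. exists (repeat 0%nat (cf_a al 1 - 1)), []. reflexivity.
  - apply factor_s_mech_pair; assumption.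
  - destruct (cf_rem_bounds al Ha Hi 1) as [Ha1 _].
    destruct (cf_rem_bounds al Ha Hi 2) as [Ha2 Hi2].
    destruct (mech_subst_image_twice upper al rho Ha Ha1) as [N Himg].
    pose proof (fun x => cf_block_twice_length _ (cf_a (cf_rem al 1) 1) x (cf_a_pos al Ha Hi 0))
      as Hlong.
    destruct (window_in_subst_image _ _ _ _ Himg Hlong m (S (S (S L'))) ltac:(lia))
      as [j [k [F Hk]]].
    destruct (IH k ltac:(lia) upper _ (- (- rho / al) / cf_rem al 1) j Ha2 Hi2) as [n Fn].
    exists (S (S n)). eapply factor_trans; [exact F|].
    rewrite <- (flat_map_cf_block_twice_s al Ha Hi n). apply factor_flat_map. exact Fn.
Qed.

Lemma v_mech alpha theta n : 0 < alpha < 1 -> v alpha theta n = mech false alpha theta n.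
Proof.
  intro Ha. unfold v, mech, mechZ. simpl. rewrite IZR_succ_mul.
  set (x := IZR n * alpha + theta).
  assert (E : frac_part x = x - IZR (Int_part x)) by reflexivity.
  rewrite E. destruct (Int_part_bounds x).
  destruct (Rle_dec (1 - alpha) (x - IZR (Int_part x))).
  - destruct (Rlt_dec (x - IZR (Int_part x)) 1); [|lra].
    rewrite (Int_part_unique (Int_part x + 1) (x + alpha)) by (rewrite plus_IZR; lra).
    rewrite Z.add_simpl_l. reflexivity.
  - rewrite (Int_part_unique (Int_part x) (x + alpha)) by lra.
    rewrite Z.sub_diag. reflexivity.
Qed.

Theorem lemma2 (alpha : R) (w : list nat) :
  0 < alpha < 1 -> irrational alpha -> inW alpha w ->
  exists t : nat, (1 <= t)%nat /\
    exists x y : list nat,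
      (is_suffix x (s alpha t) \/ is_suffix x (s alpha (t - 1))) /\
      is_prefix y (s alpha (t + 1)) /\
      w = x ++ y.
Proof.
  intros Ha Hi [_ [theta [_ [m Hw]]]].
  assert (Hwin : w = window (mech false alpha theta) m (length w)).
  { rewrite Hw at 1. apply map_ext. intro i. apply v_mech. exact Ha. }
  destruct (factor_s_mech_window (length w) false alpha theta m Ha Hi) as [n F].
  rewrite <- Hwin in F.
  exact (std_split_factor_s alpha (cf_a_pos alpha Ha Hi) n w F).
Qed.
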